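(* Let $\beta>0$. Suppose $\psi\in C^\infty(\mathbb{R})$ is supported on $[0,1]$ with $\|\psi\|_2=1$ and $\int\psi=0$, and let $m$ be a positive integer. For $1\le j\le m$ let $\psi_j(x)=m^{1/2}\psi(mx-j+1)$. For $\rho>0$ and $\kappa\in\{-1,1\}^m$ define $V_\kappa(x)=1+\rho\sum_{j=1}^m\kappa_j\psi_j(x)$ for $x\in[0,1]$. If $\rho m^{1/2+q}\|\psi^{(q)}\|_\infty\le1$ for all $q\in\{0,1,\dots,\lfloor\beta\rfloor\}$ and $\rho m^{1/2+\beta}\big(4\|\psi^{(\lfloor\beta\rfloor)}\|_\infty\vee2\|\psi^{(\lfloor\beta\rfloor+1)}\|_\infty\big)\le1$, then $V_\kappa\in\mathcal{V}_{1,\beta}(m^{1/2}\rho)$.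
   Context: $\mathcal{H}_\beta=\mathcal{H}_\beta(M)$: functions $g:[0,1]\to\mathbb{R}$ with $|g^{(\lfloor\beta\rfloor)}(x)-g^{(\lfloor\beta\rfloor)}(y)|\le M|x-y|^{\beta-\lfloor\beta\rfloor}$ for all $x,y\in[0,1]$ and $\|g^{(k)}\|_\infty\le M$ for $k=0,\dots,\lfloor\beta\rfloor$; $M$ is a fixed sufficiently large constant (in particular $M\ge1$). $\mathcal{V}_{1,\beta}(\varepsilon)=\{V\in\mathcal{H}_\beta:V\ge0,\ \|V-\bar V\mathbf 1\|_2\ge\varepsilon\}$ with $\bar V=\int_0^1V(x)dx$, $\mathbf1\equiv1$ on $[0,1]$, and $\|\cdot\|_2$ the $L^2([0,1])$ norm. *)

From Stdlib Require Import Reals Lra.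
From Coquelicot Require Import Coquelicot.
Open Scope R_scope.

Definition flr (b : R) : nat := Z.to_nat (Int_part b).

Definition supnorm (f : R -> R) : R :=
  real (Lub_Rbar (fun y => exists x, y = Rabs (f x))).

Definition smooth (f : R -> R) : Prop := forall n x, ex_derive_n f n x.

Definition Holder (beta M : R) (g : R -> R) : Prop :=
  (forall k x, (k <= flr beta)%nat -> 0 <= x <= 1 -> ex_derive_n g k x) /\
  (forall k x, (k <= flr beta)%nat -> 0 <= x <= 1 -> Rabs (Derive_n g k x) <= M) /\
  (forall x y, 0 <= x <= 1 -> 0 <= y <= 1 ->
     Rabs (Derive_n g (flr beta) x - Derive_n g (flr beta) y)
       <= M * Rpower (Rabs (x - y)) (beta - INR (flr beta))).

Definition mean01 (V : R -> R) : R := RInt V 0 1.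

Definition L2dist_to_mean (V : R -> R) : R :=
  sqrt (RInt (fun x => (V x - mean01 V) ^ 2) 0 1).

Definition Vclass (beta M eps : R) (V : R -> R) : Prop :=
  Holder beta M V /\ (forall x, 0 <= x <= 1 -> 0 <= V x) /\ eps <= L2dist_to_mean V.

Definition psij (psi : R -> R) (m j : nat) (x : R) : R :=
  sqrt (INR m) * psi (INR m * x - INR j + 1).

Definition Vkappa (psi : R -> R) (m : nat) (rho : R) (kappa : nat -> R) (x : R) : R :=
  1 + rho * sum_n_m (fun j => kappa j * psij psi m j x) 1 m.

(* The rescaled bumps [psij psi m j] have pairwise disjoint supports, so at every point at
   most one term of [Vkappa] survives.  Hence the k-th derivative of [V - 1] is bounded by
   [rho m^(k+1/2) ||psi^(k)||], [∫ V = 1] because [∫ psi = 0], and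
   [∫ (V - 1)^2 = rho^2 m ∫ psi^2].  For [K = floor beta] the increment of [V^(K)] over
   [d = |x - y|] is at most the sup bound [2 rho m^(K+1/2) ||psi^(K)||] and, by the mean value
   theorem, at most [rho m^(K+3/2) ||psi^(K+1)|| d]; using the first when [d >= 1/m] and the
   second when [d < 1/m], the hypothesis on [rho m^(1/2+beta)] turns both into [d^(beta-K)].
   So [M0 = 2] works. *)

From Stdlib Require Import Reals ZArith Lra Lia Classical.
From Coquelicot Require Import Coquelicot.
Open Scope R_scope.

Lemma sum_n_m_rel (P : (R -> R) -> R -> Prop) (F : nat -> R -> R) (L : nat -> R) lo hi :
  P (fun _ => 0) 0 ->
  (forall f g a b, P f a -> P g b -> P (fun t => f t + g t) (a + b)) ->
  (forall f g a, (forall t, f t = g t) -> P f a -> P g a) ->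
  (forall j, (lo <= j <= hi)%nat -> P (F j) (L j)) ->
  P (fun t => sum_n_m (fun j => F j t) lo hi) (sum_n_m L lo hi).
Proof.
  intros P0 Pplus Pext.
  destruct (Nat.lt_ge_cases hi lo) as [Hlt|Hle]; intros HF.
  - rewrite sum_n_m_zero by exact Hlt.
    apply (Pext (fun _ => 0)); [intros t; now rewrite sum_n_m_zero | exact P0].
  - revert HF; induction Hle as [|hi Hle IH]; intros HF.
    + rewrite sum_n_n. apply (Pext (F lo)); [intros t; now rewrite sum_n_n | apply HF; lia].
    + rewrite sum_n_Sm by lia.
      apply (Pext (fun t => sum_n_m (fun j => F j t) lo hi + F (S hi) t)).
      { intros t; now rewrite sum_n_Sm by lia. }
      apply Pplus; [apply IH; intros j Hj|]; apply HF; lia.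
Qed.

Lemma is_derive_sum_n_m (F : nat -> R -> R) (L : nat -> R) lo hi x :
  (forall j, (lo <= j <= hi)%nat -> is_derive (F j) x (L j)) ->
  is_derive (fun t => sum_n_m (fun j => F j t) lo hi) x (sum_n_m L lo hi).
Proof.
  apply (sum_n_m_rel (fun f l => is_derive f x l)).
  - apply (@is_derive_const R_AbsRing R_NormedModule).
  - intros f g a b Hf Hg. apply (@is_derive_plus R_AbsRing R_NormedModule); assumption.
  - intros f g a Hfg. apply is_derive_ext, Hfg.
Qed.

Lemma is_RInt_sum_n_m (F : nat -> R -> R) (L : nat -> R) lo hi a b :
  (forall j, (lo <= j <= hi)%nat -> is_RInt (F j) a b (L j)) ->
  is_RInt (fun t => sum_n_m (fun j => F j t) lo hi) a b (sum_n_m L lo hi).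
Proof.
  apply (sum_n_m_rel (fun f l => is_RInt f a b l)).
  - pose proof (@is_RInt_const R_NormedModule a b 0) as H0.
    change (scal (b - a) 0) with ((b - a) * 0) in H0. now rewrite Rmult_0_r in H0.
  - intros f g u v Hf Hg. apply (@is_RInt_plus R_NormedModule); assumption.
  - intros f g u Hfg. apply is_RInt_ext. intros t _; apply Hfg.
Qed.

Lemma sum_n_m_single (f : nat -> R) a b i0 :
  (a <= i0 <= b)%nat -> (forall i, (a <= i <= b)%nat -> i <> i0 -> f i = 0) ->
  sum_n_m f a b = f i0.
Proof.
  induction b as [|b IH]; intros Hi0 Hf.
  - replace a with 0%nat by lia; replace i0 with 0%nat by lia. apply sum_n_n.
  - rewrite sum_n_Sm by lia.
    destruct (Nat.eq_dec i0 (S b)) as [->|Hne].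
    + rewrite (sum_n_m_ext_loc _ (fun _ => zero)), sum_n_m_const_zero
        by (intros i Hi; apply Hf; lia).
      apply plus_zero_l.
    + rewrite IH, (Hf (S b)); try lia; [apply Rplus_0_r|].
      intros i Hi; apply Hf; lia.
Qed.

Lemma sole_nonzero_index (f : nat -> R) a b :
  (a <= b)%nat ->
  (forall i i', (a <= i <= b)%nat -> (a <= i' <= b)%nat -> f i <> 0 -> f i' <> 0 -> i = i') ->
  exists i0, (a <= i0 <= b)%nat /\ forall i, (a <= i <= b)%nat -> i <> i0 -> f i = 0.
Proof.
  intros Hab Huniq.
  destruct (classic (exists i0, (a <= i0 <= b)%nat /\ f i0 <> 0)) as [[i0 [Hi0 Hf0]]|Hnone].
  - exists i0; split; [exact Hi0|]. intros i Hi Hne.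
    apply NNPP; intros Hf. exact (Hne (Huniq i i0 Hi Hi0 Hf Hf0)).
  - exists a; split; [lia|]. intros i Hi _.
    apply NNPP; intros Hf. exact (Hnone (ex_intro _ i (conj Hi Hf))).
Qed.

Lemma Derive_n_eq0_outside (f : R -> R) (a b : R) :
  (forall x, f x <> 0 -> a <= x <= b) ->
  forall k y, y < a \/ b < y -> Derive_n f k y = 0.
Proof.
  intros Hf k; induction k as [|k IH]; intros y Hy; simpl.
  - apply NNPP; intros Hne. apply Hf in Hne; lra.
  - rewrite (Derive_ext_loc _ (fun _ => 0)); [apply Derive_const|].
    destruct Hy as [Hy|Hy].
    + apply (filter_imp (fun t => t < a)); [intros t Ht; apply IH; lra | now apply open_lt].
    + apply (filter_imp (fun t => b < t)); [intros t Ht; apply IH; lra | now apply open_gt].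
Qed.

Lemma continuous_Derive_n (f : R -> R) (k : nat) (y : R) :
  smooth f -> continuous (Derive_n f k) y.
Proof. intros Hs. apply (@ex_derive_continuous R_AbsRing R_NormedModule), (Hs (S k)). Qed.

Lemma Derive_n_support (f : R -> R) (a b : R) :
  smooth f -> (forall x, f x <> 0 -> a <= x <= b) ->
  forall k y, Derive_n f k y <> 0 -> a < y < b.
Proof.
  intros Hs Hf k y Hne.
  assert (Hc : continuity_pt (Derive_n f k) y).
  { apply continuity_pt_filterlim, continuous_Derive_n, Hs. }
  destruct (continuous_neq_0 _ _ Hc Hne) as [eps Heps].
  pose proof (cond_pos eps).
  split; apply Rnot_le_lt; intros Hy.
  - apply (Heps (- (eps / 2))); [rewrite Rabs_Ropp, Rabs_pos_eq; lra|].
    apply (Derive_n_eq0_outside f a b Hf); lra.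
  - apply (Heps (eps / 2)); [rewrite Rabs_pos_eq; lra|].
    apply (Derive_n_eq0_outside f a b Hf); lra.
Qed.

Lemma Rabs_le_supnorm (f : R -> R) (B : R) :
  (forall x, Rabs (f x) <= B) -> forall x, Rabs (f x) <= supnorm f.
Proof.
  intros HB x. unfold supnorm.
  destruct (Lub_Rbar_correct (fun y => exists x, y = Rabs (f x))) as [Hub Hlub].
  assert (Hx : Rbar_le (Rabs (f x)) (Lub_Rbar (fun y => exists x, y = Rabs (f x))))
    by (apply Hub; eauto).
  assert (HB' : Rbar_le (Lub_Rbar (fun y => exists x, y = Rabs (f x))) B)
    by (apply Hlub; intros y [t ->]; apply HB).
  destruct (Lub_Rbar _); simpl in *; tauto.
Qed.

Lemma Rabs_le_supnorm_support (f : R -> R) (a b : R) :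
  a <= b -> (forall y, continuous f y) -> (forall y, f y <> 0 -> a <= y <= b) ->
  forall x, Rabs (f x) <= supnorm f.
Proof.
  intros Hab Hc Hf.
  destruct (continuity_ab_maj (fun t => Rabs (f t)) a b Hab) as [xM [HxM _]].
  { intros t _. apply continuity_pt_filterlim, continuous_Rabs_comp, Hc. }
  apply (Rabs_le_supnorm f (Rabs (f xM))). intros x.
  destruct (Req_dec (f x) 0) as [E|E].
  - rewrite E, Rabs_R0. apply Rabs_pos.
  - apply HxM, Hf, E.
Qed.

Definition bump_sum (g : R -> R) (m : nat) (kappa : nat -> R) (x : R) : R :=
  sum_n_m (fun j => kappa j * psij g m j x) 1 m.

Lemma psij_eq_index (g : R -> R) (m i i' : nat) (x : R) :
  (forall y, g y <> 0 -> 0 < y < 1) ->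
  psij g m i x <> 0 -> psij g m i' x <> 0 -> i = i'.
Proof.
  intros Hg Hi Hi'. unfold psij in Hi, Hi'.
  assert (Hy : 0 < INR m * x - INR i + 1 < 1)
    by (apply Hg; intros E; apply Hi; rewrite E; ring).
  assert (Hy' : 0 < INR m * x - INR i' + 1 < 1)
    by (apply Hg; intros E; apply Hi'; rewrite E; ring).
  destruct (Nat.lt_total i i') as [Hlt|[Heq|Hlt]]; [|exact Heq|];
    apply le_INR in Hlt; rewrite S_INR in Hlt; lra.
Qed.

Lemma bump_sum_sole_term (g : R -> R) (m : nat) (x : R) :
  (0 < m)%nat -> (forall y, g y <> 0 -> 0 < y < 1) ->
  exists j, (1 <= j <= m)%nat /\ forall i, (1 <= i <= m)%nat -> i <> j -> psij g m i x = 0.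
Proof.
  intros Hm Hg. apply sole_nonzero_index; [lia|].
  intros i i' _ _. apply psij_eq_index, Hg.
Qed.

Lemma Rabs_bump_sum_le (g : R -> R) (m : nat) (kappa : nat -> R) (B x : R) :
  (0 < m)%nat -> (forall y, g y <> 0 -> 0 < y < 1) -> (forall y, Rabs (g y) <= B) ->
  (forall j, (1 <= j <= m)%nat -> Rabs (kappa j) <= 1) ->
  Rabs (bump_sum g m kappa x) <= sqrt (INR m) * B.
Proof.
  intros Hm Hg HB Hk.
  destruct (bump_sum_sole_term g m x Hm Hg) as [j [Hj Hz]].
  unfold bump_sum. rewrite (sum_n_m_single _ _ _ j Hj)
    by (intros i Hi Hne; rewrite Hz by assumption; apply Rmult_0_r).
  unfold psij. rewrite Rabs_mult, Rabs_mult, (Rabs_pos_eq (sqrt _)) by apply sqrt_pos.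
  apply Rle_trans with (1 * (sqrt (INR m) * Rabs (g (INR m * x - INR j + 1)))).
  - apply Rmult_le_compat_r; [apply Rmult_le_pos; [apply sqrt_pos | apply Rabs_pos] | auto].
  - rewrite Rmult_1_l. apply Rmult_le_compat_l; [apply sqrt_pos | apply HB].
Qed.

(* The supports of the [psij g m j] are disjoint, so the square of the sum has no cross terms. *)
Lemma bump_sum_sqr (g : R -> R) (m : nat) (kappa : nat -> R) (x : R) :
  (0 < m)%nat -> (forall y, g y <> 0 -> 0 < y < 1) ->
  bump_sum g m kappa x ^ 2 = sum_n_m (fun j => (kappa j * psij g m j x) ^ 2) 1 m.
Proof.
  intros Hm Hg.
  destruct (bump_sum_sole_term g m x Hm Hg) as [j [Hj Hz]].
  unfold bump_sum. rewrite !(sum_n_m_single _ _ _ j Hj); [reflexivity| |];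
    intros i Hi Hne; rewrite Hz by assumption; ring.
Qed.

Lemma is_derive_psij (g g' : R -> R) (m j : nat) (x : R) :
  (forall y, is_derive g y (g' y)) ->
  is_derive (psij g m j) x (INR m * psij g' m j x).
Proof.
  intros Hg. unfold psij. auto_derive.
  - eexists; apply Hg.
  - rewrite (is_derive_unique _ _ _ (Hg _)). unfold Rminus. ring.
Qed.

Lemma is_derive_bump_sum (g g' : R -> R) (m : nat) (kappa : nat -> R) (x : R) :
  (forall y, is_derive g y (g' y)) ->
  is_derive (bump_sum g m kappa) x (INR m * bump_sum g' m kappa x).
Proof.
  intros Hg. unfold bump_sum. rewrite <- (sum_n_m_mult_l (K := R_Ring)).
  apply (is_derive_sum_n_m (fun j t => kappa j * psij g m j t)). intros j _.
  unfold mult; simpl. rewrite Rmult_comm, Rmult_assoc.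
  apply is_derive_scal. rewrite Rmult_comm. apply is_derive_psij, Hg.
Qed.

Lemma is_derive_Derive_n (f : R -> R) (k : nat) (x : R) :
  smooth f -> is_derive (Derive_n f k) x (Derive_n f (S k) x).
Proof. intros Hs. apply Derive_correct, (Hs (S k)). Qed.

Lemma Derive_n_bump_sum (g : R -> R) (m : nat) (kappa : nat -> R) (k : nat) (x : R) :
  smooth g -> Derive_n (bump_sum g m kappa) k x = INR m ^ k * bump_sum (Derive_n g k) m kappa x.
Proof.
  intros Hs. revert x; induction k as [|k IH]; intros x.
  - cbn [Derive_n pow]. symmetry; apply Rmult_1_l.
  - change (Derive (Derive_n (bump_sum g m kappa) k) x
            = INR m ^ S k * bump_sum (Derive_n g (S k)) m kappa x).
    rewrite (Derive_ext _ _ _ IH). apply is_derive_unique.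
    replace (INR m ^ S k * bump_sum (Derive_n g (S k)) m kappa x)
      with (INR m ^ k * (INR m * bump_sum (Derive_n g (S k)) m kappa x)) by (simpl; ring).
    apply is_derive_scal, is_derive_bump_sum. intros y; apply is_derive_Derive_n, Hs.
Qed.

Lemma smooth_bump_sum (g : R -> R) (m : nat) (kappa : nat -> R) :
  smooth g -> smooth (bump_sum g m kappa).
Proof.
  intros Hs [|k] x; [exact I|].
  exists (INR m ^ k * (INR m * bump_sum (Derive_n g (S k)) m kappa x)).
  apply (is_derive_ext (fun t => INR m ^ k * bump_sum (Derive_n g k) m kappa t)).
  { intros t; symmetry; apply Derive_n_bump_sum, Hs. }
  apply is_derive_scal, is_derive_bump_sum. intros y; apply is_derive_Derive_n, Hs.
Qed.

(* Change of variables [y = m x - j + 1]; the rescaled copy of [g] lies inside [[0, 1]]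
   because [1 <= j <= m]. *)
Lemma is_RInt_rescaled (g : R -> R) (m j : nat) :
  (forall y, continuous g y) -> (forall y, g y <> 0 -> 0 <= y <= 1) -> (1 <= j <= m)%nat ->
  is_RInt (fun x => g (INR m * x - INR j + 1)) 0 1 (/ INR m * RInt g 0 1).
Proof.
  intros Hc Hg Hj.
  assert (Hj1 : 1 <= INR j) by (apply (le_INR 1); lia).
  assert (Hjm : INR j <= INR m) by (apply le_INR; lia).
  assert (Hz : forall a b, a <= b -> (b <= 0 \/ 1 <= a) -> is_RInt g a b 0).
  { intros a b Hab Hout. apply (is_RInt_ext (fun _ => 0)).
    - intros y Hy. rewrite Rmin_left, Rmax_right in Hy by lra.
      symmetry; apply NNPP; intros Hne; apply Hg in Hne; lra.
    - pose proof (@is_RInt_const R_NormedModule a b 0) as H0.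
      change (scal (b - a) 0) with ((b - a) * 0) in H0. now rewrite Rmult_0_r in H0. }
  assert (I01 : is_RInt g 0 1 (RInt g 0 1)).
  { apply (@RInt_correct R_CompleteNormedModule), ex_RInt_continuous. intros; apply Hc. }
  assert (I : is_RInt g (INR m * 0 + (1 - INR j)) (INR m * 1 + (1 - INR j)) (RInt g 0 1)).
  { replace (RInt g 0 1) with (plus (plus 0 (RInt g 0 1)) 0) by (unfold plus; simpl; ring).
    apply (@is_RInt_Chasles R_NormedModule g _ 1);
      [apply (@is_RInt_Chasles R_NormedModule g _ 0)|]; [|exact I01|]; apply Hz; lra. }
  apply is_RInt_comp_lin, (is_RInt_scal _ _ _ (/ INR m)) in I.
  eapply is_RInt_ext; [|exact I].
  intros x _. unfold scal; simpl; unfold mult; simpl.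
  rewrite <- Rmult_assoc, Rinv_l, Rmult_1_l by (apply not_0_INR; lia).
  f_equal; ring.
Qed.

Lemma is_RInt_bump_sum (g : R -> R) (m : nat) (kappa : nat -> R) :
  (forall y, continuous g y) -> (forall y, g y <> 0 -> 0 <= y <= 1) ->
  is_RInt (bump_sum g m kappa) 0 1
    (sum_n_m (fun j => kappa j * (sqrt (INR m) * (/ INR m * RInt g 0 1))) 1 m).
Proof.
  intros Hc Hg.
  apply (is_RInt_sum_n_m (fun j t => kappa j * psij g m j t)). intros j Hj.
  do 2 apply (@is_RInt_scal R_NormedModule). now apply is_RInt_rescaled.
Qed.

Lemma is_RInt_bump_sum_sqr (g : R -> R) (m : nat) (kappa : nat -> R) :
  (0 < m)%nat -> (forall y, continuous g y) -> (forall y, g y <> 0 -> 0 < y < 1) ->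
  (forall j, (1 <= j <= m)%nat -> kappa j ^ 2 = 1) ->
  is_RInt (fun x => bump_sum g m kappa x ^ 2) 0 1 (INR m * RInt (fun y => g y ^ 2) 0 1).
Proof.
  intros Hm Hc Hg Hk.
  apply (is_RInt_ext (fun x => sum_n_m (fun j => (kappa j * psij g m j x) ^ 2) 1 m)).
  { intros x _. symmetry; apply bump_sum_sqr; assumption. }
  replace (INR m) with (INR (S m - 1)) by (f_equal; lia). rewrite <- sum_n_m_const.
  apply (is_RInt_sum_n_m (fun j x => (kappa j * psij g m j x) ^ 2)). intros j Hj.
  apply (is_RInt_ext (fun x => INR m * (fun y => g y ^ 2) (INR m * x - INR j + 1))).
  { intros x _. unfold psij. rewrite !Rpow_mult_distr, Hk, pow2_sqrt by (auto; apply pos_INR).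
    symmetry; apply Rmult_1_l. }
  replace (RInt (fun y => g y ^ 2) 0 1)
    with (INR m * (/ INR m * RInt (fun y => g y ^ 2) 0 1))
    by (field; apply not_0_INR; lia).
  apply (@is_RInt_scal R_NormedModule (fun x => (fun y => g y ^ 2) (INR m * x - INR j + 1))).
  apply (is_RInt_rescaled (fun y => g y ^ 2) m j); [| |exact Hj].
  - intros y. apply (continuous_ext (fun t => mult (g t) (g t)));
      [intros t; simpl; now rewrite Rmult_1_r|].
    apply (@continuous_mult R_UniformSpace R_AbsRing); apply Hc.
  - intros y Hy. assert (Hgy : g y <> 0) by (intros E; apply Hy; rewrite E; ring).
    specialize (Hg y Hgy); lra.
Qed.

Lemma Rpower_1_l (c : R) : Rpower 1 c = 1.
Proof. unfold Rpower. rewrite ln_1, Rmult_0_r. apply exp_0. Qed.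

Lemma Rpower_half_plus_nat (x : R) (q : nat) : 0 < x -> Rpower x (/ 2 + INR q) = sqrt x * x ^ q.
Proof. intros Hx. rewrite Rpower_plus, Rpower_sqrt, Rpower_pow; auto. Qed.

(* Interpolation between a sup bound and a Lipschitz bound: for [d >= 1/x] the first one wins,
   for [d < 1/x] the second, using [L d = (L x^(al-1)) (x d)^(1-al) d^al]. *)
Lemma Rmin_le_Rpower (x d al S L : R) :
  0 < x -> 0 <= d -> 0 <= al <= 1 -> 0 <= L ->
  S * Rpower x al <= 1 -> L * Rpower x (al - 1) <= 1 ->
  Rmin S (L * d) <= Rpower d al.
Proof.
  intros Hx Hd Hal HL HS HLd.
  assert (Hpos : forall y c, 0 < Rpower y c) by (intros; apply exp_pos).
  destruct (Rlt_or_le d (/ x)) as [Hsmall|Hlarge].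
  - eapply Rle_trans; [apply Rmin_r|].
    destruct (Req_dec d 0) as [->|Hd0]; [rewrite Rmult_0_r; left; apply Hpos|].
    assert (Hxd : x * d < 1).
    { apply (Rmult_lt_compat_l x) in Hsmall; [|exact Hx]. now rewrite Rinv_r in Hsmall by lra. }
    assert (Hsplit : d = Rpower x (al - 1) * Rpower (x * d) (1 - al) * Rpower d al).
    { rewrite <- Rpower_mult_distr by lra.
      replace (Rpower x (al - 1) * (Rpower x (1 - al) * Rpower d (1 - al)) * Rpower d al)
        with (Rpower x (al - 1 + (1 - al)) * Rpower d (1 - al + al))
        by (rewrite !Rpower_plus; ring).
      replace (al - 1 + (1 - al)) with 0 by ring. replace (1 - al + al) with 1 by ring.
      rewrite Rpower_O, Rpower_1 by lra. ring. }
    assert (HE : Rpower (x * d) (1 - al) <= 1).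
    { rewrite <- (Rpower_1_l (1 - al)) at 2. apply Rle_Rpower_l; [lra | split; nra]. }
    rewrite Hsplit at 1.
    replace (L * (Rpower x (al - 1) * Rpower (x * d) (1 - al) * Rpower d al))
      with (L * Rpower x (al - 1) * Rpower (x * d) (1 - al) * Rpower d al) by ring.
    apply Rle_trans with (1 * 1 * Rpower d al); [|lra].
    apply Rmult_le_compat_r; [left; apply Hpos|].
    apply Rmult_le_compat; [| left; apply Hpos | exact HLd | exact HE].
    apply Rmult_le_pos; [exact HL | left; apply Hpos].
  - eapply Rle_trans; [apply Rmin_l|].
    apply Rle_trans with (Rpower (/ x) al).
    + replace (Rpower (/ x) al) with (/ Rpower x al)
        by (unfold Rpower; rewrite ln_Rinv, <- exp_Ropp by exact Hx; f_equal; ring).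
      apply (Rmult_le_reg_r (Rpower x al)); [apply Hpos|].
      rewrite Rinv_l by (apply Rgt_not_eq, Hpos). exact HS.
    + apply Rle_Rpower_l; [lra | split; [apply Rinv_0_lt_compat|]; lra].
Qed.

Lemma flr_spec (b : R) : 0 <= b -> INR (flr b) <= b < INR (flr b) + 1.
Proof.
  intros Hb. unfold flr. destruct (base_Int_part b) as [H1 H2].
  assert (Hz : (-1 < Int_part b)%Z) by (apply lt_IZR; lra).
  rewrite INR_IZR_INZ, Z2Nat.id by lia. lra.
Qed.

Section Vkappa.

Variables (psi : R -> R) (m : nat) (rho : R) (kappa : nat -> R).
Hypotheses (psi_smooth : smooth psi) (psi_support : forall x, psi x <> 0 -> 0 <= x <= 1)
  (m_pos : (0 < m)%nat) (rho_pos : 0 < rho)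
  (kappa_sign : forall j, (1 <= j <= m)%nat -> kappa j = 1 \/ kappa j = -1).

Local Notation V := (Vkappa psi m rho kappa).

Lemma psi_continuous (y : R) : continuous psi y.
Proof. exact (continuous_Derive_n psi 0 y psi_smooth). Qed.

Lemma Vkappa_eq (x : R) : V x = 1 + rho * bump_sum psi m kappa x.
Proof. reflexivity. Qed.

Lemma Derive_n_psi_support (k : nat) (y : R) : Derive_n psi k y <> 0 -> 0 < y < 1.
Proof. exact (Derive_n_support psi 0 1 psi_smooth psi_support k y). Qed.

Lemma Rabs_Derive_n_psi_le_supnorm (k : nat) (x : R) :
  Rabs (Derive_n psi k x) <= supnorm (Derive_n psi k).
Proof.
  apply (Rabs_le_supnorm_support _ 0 1); [lra | intros y; apply continuous_Derive_n, psi_smooth|].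
  intros y Hy; apply Derive_n_psi_support in Hy; lra.
Qed.

Lemma supnorm_Derive_n_psi_ge0 (k : nat) : 0 <= supnorm (Derive_n psi k).
Proof. eapply Rle_trans; [apply Rabs_pos | apply (Rabs_Derive_n_psi_le_supnorm k 0)]. Qed.

Lemma Rabs_bump_sum_Derive_n_le (k : nat) (x : R) :
  Rabs (bump_sum (Derive_n psi k) m kappa x) <= sqrt (INR m) * supnorm (Derive_n psi k).
Proof.
  apply Rabs_bump_sum_le; [exact m_pos | exact (Derive_n_psi_support k) | |].
  - apply Rabs_Derive_n_psi_le_supnorm.
  - intros j Hj. apply Rabs_le. destruct (kappa_sign j Hj) as [-> | ->]; lra.
Qed.

Lemma Rabs_bump_sum_Derive_n_sub_le (k : nat) (x y : R) :
  Rabs (bump_sum (Derive_n psi k) m kappa x - bump_sum (Derive_n psi k) m kappa y)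
  <= Rmin (2 * (sqrt (INR m) * supnorm (Derive_n psi k)))
          (INR m * (sqrt (INR m) * supnorm (Derive_n psi (S k))) * Rabs (x - y)).
Proof.
  apply Rmin_glb.
  - unfold Rminus. eapply Rle_trans; [apply Rabs_triang|]. rewrite Rabs_Ropp.
    pose proof (Rabs_bump_sum_Derive_n_le k x). pose proof (Rabs_bump_sum_Derive_n_le k y). lra.
  - rewrite Rabs_minus_sym, (Rabs_minus_sym x).
    apply (bounded_variation _ (fun t => INR m * bump_sum (Derive_n psi (S k)) m kappa t)).
    intros t _. split.
    + apply is_derive_bump_sum. intros z; apply is_derive_Derive_n, psi_smooth.
    + rewrite Rabs_mult, Rabs_pos_eq by apply pos_INR.
      apply Rmult_le_compat_l; [apply pos_INR | apply Rabs_bump_sum_Derive_n_le].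
Qed.

Lemma smooth_Vkappa : smooth V.
Proof.
  intros k x. change (ex_derive_n (fun t => 1 + rho * bump_sum psi m kappa t) k x).
  apply ex_derive_n_plus; apply filter_forall; intros y k' _.
  - apply ex_derive_n_const.
  - apply ex_derive_n_scal_l, smooth_bump_sum, psi_smooth.
Qed.

Lemma Derive_n_Vkappa (k : nat) (x : R) :
  Derive_n V (S k) x = rho * (INR m ^ S k * bump_sum (Derive_n psi (S k)) m kappa x).
Proof.
  rewrite (Derive_n_ext _ (fun t => 1 + rho * bump_sum psi m kappa t)) by reflexivity.
  rewrite Derive_n_plus; try (apply filter_forall; intros y k' _).
  - rewrite Derive_n_const, Derive_n_scal_l, Derive_n_bump_sum by exact psi_smooth. ring.
  - apply ex_derive_n_const.
  - apply ex_derive_n_scal_l, smooth_bump_sum, psi_smooth.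
Qed.

Lemma Derive_n_Vkappa_sub (k : nat) (x y : R) :
  Derive_n V k x - Derive_n V k y
  = rho * INR m ^ k * (bump_sum (Derive_n psi k) m kappa x - bump_sum (Derive_n psi k) m kappa y).
Proof.
  destruct k as [|k].
  - change (Derive_n psi 0) with psi. cbn [Derive_n pow]. rewrite !Vkappa_eq. ring.
  - rewrite !Derive_n_Vkappa. ring.
Qed.

Lemma Rabs_Vkappa_sub_1_le (x : R) : Rabs (V x - 1) <= rho * sqrt (INR m) * supnorm psi.
Proof.
  rewrite Vkappa_eq.
  replace (1 + rho * bump_sum psi m kappa x - 1) with (rho * bump_sum psi m kappa x) by ring.
  rewrite Rabs_mult, Rabs_pos_eq, Rmult_assoc by lra.
  apply Rmult_le_compat_l; [lra | exact (Rabs_bump_sum_Derive_n_le 0 x)].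
Qed.

Lemma Vkappa_nonneg (x : R) : rho * sqrt (INR m) * supnorm psi <= 1 -> 0 <= V x.
Proof. intros H. pose proof (Rabs_Vkappa_sub_1_le x) as Hx. apply Rabs_le_between in Hx. lra. Qed.

Lemma Rabs_Derive_n_Vkappa_le (k : nat) (x : R) :
  rho * (sqrt (INR m) * INR m ^ k) * supnorm (Derive_n psi k) <= 1 ->
  Rabs (Derive_n V k x) <= 2.
Proof.
  intros Hk. destruct k as [|k].
  - cbn [Derive_n]. change (Derive_n psi 0) with psi in Hk. rewrite pow_O, Rmult_1_r in Hk.
    replace (V x) with (1 + (V x - 1)) by ring.
    eapply Rle_trans; [apply Rabs_triang|]. rewrite Rabs_R1.
    pose proof (Rabs_Vkappa_sub_1_le x). lra.
  - rewrite Derive_n_Vkappa, Rabs_mult, Rabs_mult, !Rabs_pos_eq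
      by (try apply pow_le; try apply pos_INR; lra).
    apply Rle_trans with 1; [|lra]. eapply Rle_trans; [|exact Hk].
    pose proof (Rabs_bump_sum_Derive_n_le (S k) x).
    assert (0 <= rho * INR m ^ S k) by (apply Rmult_le_pos; [lra | apply pow_le, pos_INR]).
    replace (rho * (sqrt (INR m) * INR m ^ S k) * supnorm (Derive_n psi (S k)))
      with (rho * INR m ^ S k * (sqrt (INR m) * supnorm (Derive_n psi (S k)))) by ring.
    rewrite <- Rmult_assoc. apply Rmult_le_compat_l; assumption.
Qed.

Lemma Rabs_Derive_n_Vkappa_sub_le_Rmin (k : nat) (x y : R) :
  Rabs (Derive_n V k x - Derive_n V k y)
  <= Rmin (rho * (sqrt (INR m) * INR m ^ k) * (2 * supnorm (Derive_n psi k)))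
          (rho * (sqrt (INR m) * INR m ^ k) * INR m * supnorm (Derive_n psi (S k)) * Rabs (x - y)).
Proof.
  assert (Hr : 0 <= rho * INR m ^ k) by (apply Rmult_le_pos; [lra | apply pow_le, pos_INR]).
  pose proof (Rabs_bump_sum_Derive_n_sub_le k x y) as HB.
  rewrite Derive_n_Vkappa_sub, Rabs_mult, (Rabs_pos_eq (rho * _)) by exact Hr.
  apply Rmin_glb.
  - apply Rle_trans with (rho * INR m ^ k * (2 * (sqrt (INR m) * supnorm (Derive_n psi k))));
      [|right; ring].
    apply Rmult_le_compat_l; [exact Hr|]. eapply Rle_trans; [exact HB | apply Rmin_l].
  - apply Rle_trans with
      (rho * INR m ^ k * (INR m * (sqrt (INR m) * supnorm (Derive_n psi (S k))) * Rabs (x - y)));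
      [|right; ring].
    apply Rmult_le_compat_l; [exact Hr|]. eapply Rle_trans; [exact HB | apply Rmin_r].
Qed.

Lemma Rabs_Derive_n_Vkappa_sub_le (beta x y : R) :
  0 < beta ->
  rho * Rpower (INR m) (/ 2 + beta) *
    Rmax (4 * supnorm (Derive_n psi (flr beta))) (2 * supnorm (Derive_n psi (S (flr beta)))) <= 1 ->
  Rabs (Derive_n V (flr beta) x - Derive_n V (flr beta) y)
  <= Rpower (Rabs (x - y)) (beta - INR (flr beta)).
Proof.
  intros Hbeta Hb. destruct (flr_spec beta) as [HK1 HK2]; [lra|].
  set (K := flr beta) in *. set (al := beta - INR K).
  set (sK := supnorm (Derive_n psi K)) in *. set (sK1 := supnorm (Derive_n psi (S K))) in *.
  assert (Hm : 0 < INR m) by (apply lt_0_INR, m_pos).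
  assert (HP : Rpower (INR m) (/ 2 + beta) = sqrt (INR m) * INR m ^ K * Rpower (INR m) al).
  { replace (/ 2 + beta) with (/ 2 + INR K + al) by (unfold al; ring).
    rewrite Rpower_plus, Rpower_half_plus_nat by exact Hm. reflexivity. }
  assert (HP1 : INR m * Rpower (INR m) (al - 1) = Rpower (INR m) al).
  { rewrite <- (Rpower_1 (INR m)) at 1 by exact Hm. rewrite <- Rpower_plus. f_equal; ring. }
  assert (Hb0 : 0 <= rho * Rpower (INR m) (/ 2 + beta))
    by (apply Rmult_le_pos; [lra | left; apply exp_pos]).
  assert (H4 : rho * Rpower (INR m) (/ 2 + beta) * (4 * sK) <= 1)
    by (eapply Rle_trans; [|exact Hb]; apply Rmult_le_compat_l; [exact Hb0 | apply Rmax_l]).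
  assert (H2 : rho * Rpower (INR m) (/ 2 + beta) * (2 * sK1) <= 1)
    by (eapply Rle_trans; [|exact Hb]; apply Rmult_le_compat_l; [exact Hb0 | apply Rmax_r]).
  rewrite HP in H4, H2.
  eapply Rle_trans; [apply Rabs_Derive_n_Vkappa_sub_le_Rmin|].
  set (c := rho * (sqrt (INR m) * INR m ^ K)). fold sK sK1.
  apply (Rmin_le_Rpower (INR m)); [exact Hm | apply Rabs_pos | unfold al; lra | | |].
  - apply Rmult_le_pos; [apply Rmult_le_pos; [|lra] | apply supnorm_Derive_n_psi_ge0].
    apply Rmult_le_pos; [lra | apply Rmult_le_pos; [apply sqrt_pos | apply pow_le; lra]].
  - replace (c * (2 * sK) * Rpower (INR m) al)
      with (/ 2 * (rho * (sqrt (INR m) * INR m ^ K * Rpower (INR m) al) * (4 * sK)))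
      by (unfold c; field). lra.
  - replace (c * INR m * sK1 * Rpower (INR m) (al - 1))
      with (/ 2 * (rho * (sqrt (INR m) * INR m ^ K * Rpower (INR m) al) * (2 * sK1)))
      by (unfold c; rewrite <- HP1; field). lra.
Qed.

Lemma Vkappa_Holder (beta M : R) :
  0 < beta -> 2 <= M ->
  (forall q, (q <= flr beta)%nat ->
     rho * (sqrt (INR m) * INR m ^ q) * supnorm (Derive_n psi q) <= 1) ->
  rho * Rpower (INR m) (/ 2 + beta) *
    Rmax (4 * supnorm (Derive_n psi (flr beta))) (2 * supnorm (Derive_n psi (S (flr beta)))) <= 1 ->
  Holder beta M V.
Proof.
  intros Hbeta HM Hq Hb. split; [|split].
  - intros k x _ _. apply smooth_Vkappa.
  - intros k x Hk _. apply Rle_trans with 2; [apply Rabs_Derive_n_Vkappa_le, Hq, Hk | lra].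
  - intros x y _ _. eapply Rle_trans; [apply Rabs_Derive_n_Vkappa_sub_le; assumption|].
    rewrite <- (Rmult_1_l (Rpower _ _)) at 1.
    apply Rmult_le_compat_r; [left; apply exp_pos | lra].
Qed.

Lemma mean01_Vkappa : RInt psi 0 1 = 0 -> mean01 V = 1.
Proof.
  intros H0. unfold mean01.
  pose proof (is_RInt_bump_sum psi m kappa psi_continuous psi_support) as HB.
  rewrite H0, (sum_n_m_ext _ (fun _ => 0)), sum_n_m_const, Rmult_0_r in HB
    by (intros; rewrite !Rmult_0_r; reflexivity).
  assert (I : is_RInt V 0 1 (plus (scal (1 - 0) 1) (scal rho 0)))
    by (apply (@is_RInt_plus R_NormedModule);
        [apply (@is_RInt_const R_NormedModule) | apply (@is_RInt_scal R_NormedModule), HB]).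
  rewrite (is_RInt_unique _ _ _ _ I).
  change (plus (scal (1 - 0) 1) (scal rho 0)) with ((1 - 0) * 1 + rho * 0). ring.
Qed.

Lemma L2dist_to_mean_Vkappa :
  RInt psi 0 1 = 0 -> RInt (fun x => psi x ^ 2) 0 1 = 1 -> L2dist_to_mean V = sqrt (INR m) * rho.
Proof.
  intros H0 H1. unfold L2dist_to_mean. rewrite mean01_Vkappa by exact H0.
  assert (E : forall x, rho ^ 2 * bump_sum psi m kappa x ^ 2 = (V x - 1) ^ 2)
    by (intros x; rewrite Vkappa_eq; ring).
  assert (I : is_RInt (fun x => (V x - 1) ^ 2) 0 1
                (rho ^ 2 * (INR m * RInt (fun y => psi y ^ 2) 0 1))).
  { apply (is_RInt_ext _ _ _ _ _ (fun x _ => E x)).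
    apply (@is_RInt_scal R_NormedModule (fun x => bump_sum psi m kappa x ^ 2)).
    apply is_RInt_bump_sum_sqr;
      [exact m_pos | exact psi_continuous | exact (Derive_n_psi_support 0) |].
    intros j Hj. destruct (kappa_sign j Hj) as [-> | ->]; ring. }
  rewrite (is_RInt_unique _ _ _ _ I), H1, Rmult_1_r, sqrt_mult, sqrt_pow2
    by (try apply pow2_ge_0; try apply pos_INR; lra).
  ring.
Qed.

End Vkappa.

Theorem proposition7p2 :
  exists M0 : R, 1 <= M0 /\
  forall M : R, M0 <= M ->
  forall (beta : R) (psi : R -> R) (m : nat) (rho : R) (kappa : nat -> R),
    0 < beta ->
    smooth psi ->
    (forall x, psi x <> 0 -> 0 <= x <= 1) ->
    RInt (fun x => psi x ^ 2) 0 1 = 1 ->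
    RInt psi 0 1 = 0 ->
    (0 < m)%nat ->
    0 < rho ->
    (forall j, (1 <= j <= m)%nat -> kappa j = 1 \/ kappa j = -1) ->
    (forall q, (q <= flr beta)%nat ->
       rho * Rpower (INR m) (/2 + INR q) * supnorm (Derive_n psi q) <= 1) ->
    rho * Rpower (INR m) (/2 + beta) *
      Rmax (4 * supnorm (Derive_n psi (flr beta)))
           (2 * supnorm (Derive_n psi (S (flr beta)))) <= 1 ->
    Vclass beta M (sqrt (INR m) * rho) (Vkappa psi m rho kappa).
Proof.
  exists 2. split; [lra|].
  intros M HM beta psi m rho kappa Hbeta Hs Hsupp Hsq Hmean Hm Hrho Hk Hq Hb.
  assert (Hq' : forall q, (q <= flr beta)%nat ->
            rho * (sqrt (INR m) * INR m ^ q) * supnorm (Derive_n psi q) <= 1).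
  { intros q Hle. rewrite <- Rpower_half_plus_nat by (apply lt_0_INR, Hm). now apply Hq. }
  split; [|split].
  - now apply Vkappa_Holder.
  - intros x _. apply Vkappa_nonneg; try assumption.
    specialize (Hq' 0%nat (Nat.le_0_l _)). now rewrite pow_O, Rmult_1_r in Hq'.
  - rewrite L2dist_to_mean_Vkappa by assumption. lra.
Qed.
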